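(* Fix $\lambda_1,\lambda_2,\lambda_3\in\mathbb{Z}_{\ge0}$. Let $\mathbf{w}=[w_1,w_2,\dots]$ be an infinite reduced sequence and $\{k_j\}_{j\ge1}$ its ratio number sequence. Then: (1) if each of $1,2,3$ appears infinitely many times in $\mathbf{w}$, then $\lim_{j\to\infty}k_j=3+\lambda_1+\lambda_2+\lambda_3$; (2) if some index $i\in\{1,2,3\}$ appears only finitely many times in $\mathbf{w}$, then there exists a real number $k_\beta$ with $\lim_{j\to\infty}k_j=k_\beta$.
   Context: Generalized Markov mutations (for the equation $X_1^2+X_2^2+X_3^2+\lambda_3X_1X_2+\lambda_1X_2X_3+\lambda_2X_3X_1=(3+\lambda_1+\lambda_2+\lambda_3)X_1X_2X_3$) are the maps on positive rational triples $\mu_1(x_1,x_2,x_3)=(\frac{x_2^2+\lambda_1x_2x_3+x_3^2}{x_1},x_2,x_3)$, $\mu_2(x_1,x_2,x_3)=(x_1,\frac{x_1^2+\lambda_2x_1x_3+x_3^2}{x_2},x_3)$, $\mu_3(x_1,x_2,x_3)=(x_1,x_2,\frac{x_1^2+\lambda_3x_1x_2+x_2^2}{x_3})$. A sequence $\mathbf{w}=[w_1,w_2,\dots]$ with entries in $\{1,2,3\}$ is reduced if $w_i\ne w_{i+1}$ for all $i$. Ratio number sequence: set $T_0=(1,1,1)$ and $T_j=\mu_{w_j}(T_{j-1})$ for $j\ge1$; $k_j$ is the $w_j$-th component of $T_j$ divided by the product of the other two components of $T_j$. *)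

From HB Require Import structures.
From mathcomp Require Import all_boot all_order all_algebra.
From mathcomp Require Import all_classical all_reals all_analysis.
Set Implicit Arguments. Unset Strict Implicit. Unset Printing Implicit Defensive.
Import Order.TTheory GRing.Theory Num.Theory.
Local Open Scope ring_scope.

Definition triple := (rat * rat * rat)%type.
Definition t1 (t : triple) : rat := t.1.1.
Definition t2 (t : triple) : rat := t.1.2.
Definition t3 (t : triple) : rat := t.2.

Definition mu (l1 l2 l3 : nat) (i : nat) (t : triple) : triple :=
  let x1 := t1 t in let x2 := t2 t in let x3 := t3 t in
  match i with
  | 1%N => ((x2 ^+ 2 + l1%:R * x2 * x3 + x3 ^+ 2) / x1, x2, x3)
  | 2%N => (x1, (x1 ^+ 2 + l2%:R * x1 * x3 + x3 ^+ 2) / x2, x3)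
  | 3%N => (x1, x2, (x1 ^+ 2 + l3%:R * x1 * x2 + x2 ^+ 2) / x3)
  | _ => t
  end.

(* T_0 = (1,1,1), T_j = mu_{w_j} (T_{j-1}); w is indexed from 1 (w 0 unused) *)
Fixpoint Tseq (l1 l2 l3 : nat) (w : nat -> nat) (j : nat) : triple :=
  match j with
  | 0%N => (1, 1, 1)
  | j'.+1 => mu l1 l2 l3 (w j) (Tseq l1 l2 l3 w j')
  end.

Definition kseq (l1 l2 l3 : nat) (w : nat -> nat) (j : nat) : rat :=
  let t := Tseq l1 l2 l3 w j in
  match w j with
  | 1%N => t1 t / (t2 t * t3 t)
  | 2%N => t2 t / (t1 t * t3 t)
  | _ => t3 t / (t1 t * t2 t)
  end.

Definition reduced_seq (w : nat -> nat) : Prop :=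
  (forall j, (1 <= j)%N -> (1 <= w j <= 3)%N) /\
  (forall j, (1 <= j)%N -> w j != w j.+1).

Definition appears_infinitely (w : nat -> nat) (i : nat) : Prop :=
  forall N, exists j, (N <= j)%N /\ w j = i.

From HB Require Import structures.
From mathcomp Require Import all_boot all_order all_algebra.
From mathcomp Require Import all_classical all_reals all_analysis.
From mathcomp Require Import ring lra.
Import Order.TTheory GRing.Theory Num.Theory.
Import numFieldNormedType.Exports.
Local Open Scope classical_set_scope.
Local Open Scope ring_scope.

(* Let F be the form x1^2 + x2^2 + x3^2 + l3 x1 x2 + l1 x2 x3 + l2 x3 x1 - K x1 x2 x3
   with K = 3 + l1 + l2 + l3. It vanishes at (1,1,1), and mu_i replaces x_i by the other
   root of F = 0 viewed as a quadratic in x_i, so F(T_j) = 0 for all j. With P = x1 x2 x3,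
   k_j = x_(w_j)^2 / P, hence k_j <= K; and if {a, b} = {1,2,3} minus w_(j+1), then
   w_j is a or b, so k_(j+1) = (x_a^2 + l x_a x_b + x_b^2) / P >= k_j. Thus (k_j) is
   nondecreasing and bounded by K, which gives (2). For (1): as k_j >= 2, the newest
   coordinate dominates the other two and at least doubles at each step, and no
   coordinate ever decreases. Once every index has been mutated after time n, all
   coordinates are at least n, and then K - k_j <= (2 + l1 + l2 + l3) / n. *)

Arguments t1 !t /.
Arguments t2 !t /.
Arguments t3 !t /.

(* As in [kseq], indices outside 1..3 select the third coordinate. *)
Definition coord (t : triple) (i : nat) : rat :=
  match i with 1%N => t1 t | 2%N => t2 t | _ => t3 t end.

Definition coprod (t : triple) (i : nat) : rat :=
  match i with 1%N => t2 t * t3 t | 2%N => t1 t * t3 t | _ => t1 t * t2 t end.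

Definition tprod (t : triple) : rat := t1 t * t2 t * t3 t.

Definition ratio (t : triple) (i : nat) : rat := coord t i / coprod t i.

Lemma forall_coordP (P : rat -> Prop) t :
  (forall b, P (coord t b)) <-> [/\ P (t1 t), P (t2 t) & P (t3 t)].
Proof.
split=> [tP | [P1 P2 P3] [|[|[|b]]]] //.
by split; [exact: (tP 1%N) | exact: (tP 2%N) | exact: (tP 3%N)].
Qed.

Lemma coord_index_in_range b :
  exists2 a, (1 <= a <= 3)%N & forall t, coord t b = coord t a.
Proof. by case: b => [|[|[|[|b]]]]; [exists 3%N | exists 1%N | exists 2%N | exists 3%N..]. Qed.

Lemma coord_coprod t i : coord t i * coprod t i = tprod t.
Proof. by rewrite /tprod; case: i => [|[|[|i]]] /=; ring. Qed.

Lemma coprod_gt0 t i : (forall b, 0 < coord t b) -> 0 < coprod t i.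
Proof.
move=> /(forall_coordP (<%R 0)) [h1 h2 h3].
by case: i => [|[|[|i]]]; rewrite /= mulr_gt0.
Qed.

Lemma coprod_ge1 t i : (forall b, 1 <= coord t b) -> 1 <= coprod t i.
Proof.
move=> /(forall_coordP (<=%R 1)) [h1 h2 h3].
by case: i => [|[|[|i]]]; rewrite /= mulr_ege1.
Qed.

Lemma tprod_gt0 t : (forall b, 0 < coord t b) -> 0 < tprod t.
Proof. by move=> /(forall_coordP (<%R 0)) [h1 h2 h3]; rewrite !mulr_gt0. Qed.

Lemma ratio_sqE t i : (forall b, 0 < coord t b) ->
  ratio t i = coord t i ^+ 2 / tprod t.
Proof.
move=> t_pos; rewrite /ratio -(coord_coprod t i) expr2 invfM mulrA.
by rewrite mulfK // gt_eqF.
Qed.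

Lemma coprod_ge_coord t a i : (forall b, 1 <= coord t b) ->
  (1 <= a <= 3)%N -> (1 <= i <= 3)%N -> a != i -> coord t a <= coprod t i.
Proof.
move=> /(forall_coordP (<=%R 1)) [h1 h2 h3].
by case: a => [|[|[|[|a]]]] //; case: i => [|[|[|[|i]]]] //= _ _ _;
  rewrite ?ler_peMl ?ler_peMr // (le_trans ler01).
Qed.

(* Divided by xyz, each of the five terms is at most its coefficient over n, as x is the
   largest variable. *)
Lemma quadratic_tail_le {R : realFieldType} {x y z p q r n : R} :
  0 <= n -> n <= y -> n <= z -> y <= x -> z <= x -> 0 <= p -> 0 <= q -> 0 <= r ->
  n * (y ^+ 2 + z ^+ 2 + p * x * y + q * y * z + r * z * x)
    <= (2 + p + q + r) * (x * y * z).
Proof.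
move=> n0 ny nz yx zx p0 q0 r0.
have y0 := le_trans n0 ny; have z0 := le_trans n0 nz; have x0 := le_trans y0 yx.
have sub_ge0 (u v : R) : u <= v -> 0 <= v - u by rewrite subr_ge0.
have := mulr_ge0 (mulr_ge0 y0 y0) (sub_ge0 _ _ nz).
have := mulr_ge0 (mulr_ge0 y0 z0) (sub_ge0 _ _ yx).
have := mulr_ge0 (mulr_ge0 z0 z0) (sub_ge0 _ _ ny).
have := mulr_ge0 (mulr_ge0 z0 y0) (sub_ge0 _ _ zx).
have := mulr_ge0 (mulr_ge0 (mulr_ge0 p0 x0) y0) (sub_ge0 _ _ nz).
have := mulr_ge0 (mulr_ge0 (mulr_ge0 q0 y0) z0) (sub_ge0 _ _ (le_trans ny yx)).
have := mulr_ge0 (mulr_ge0 (mulr_ge0 r0 z0) x0) (sub_ge0 _ _ ny).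
lra.
Qed.

Lemma appears_all_within (w : nat -> nat) (s : seq nat) n :
  {in s, forall a, appears_infinitely w a} ->
  exists J, {in s, forall a, exists2 i, (n <= i <= J)%N & w i = a}.
Proof.
elim: s => [|a s IH] s_inf; first by exists 0%N.
have [J visits] := IH (fun b bs => s_inf b (mem_behead (s := a :: s) bs)).
have [i [ni wi]] := s_inf a (mem_head a s) n.
exists (maxn i J) => b /predU1P [-> | bs]; first by exists i; rewrite ?ni ?leq_maxl.
have [i' /andP [ni' i'J] wi'] := visits b bs.
by exists i'; rewrite // ni' (leq_trans i'J) ?leq_maxr.
Qed.

Section Mutation.
Variables l1 l2 l3 : nat.

Definition exchange (t : triple) (i : nat) : rat :=
  match i with
  | 1%N => t2 t ^+ 2 + l1%:R * t2 t * t3 t + t3 t ^+ 2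
  | 2%N => t1 t ^+ 2 + l2%:R * t1 t * t3 t + t3 t ^+ 2
  | _ => t1 t ^+ 2 + l3%:R * t1 t * t2 t + t2 t ^+ 2
  end.

Definition markov_sum (t : triple) : rat :=
  t1 t ^+ 2 + t2 t ^+ 2 + t3 t ^+ 2
  + l3%:R * t1 t * t2 t + l1%:R * t2 t * t3 t + l2%:R * t3 t * t1 t.

Definition markov_const : rat := (3 + l1 + l2 + l3)%N%:R.

Lemma coord_mu t i : (1 <= i <= 3)%N ->
  coord (mu l1 l2 l3 i t) i = exchange t i / coord t i.
Proof. by case: i => [|[|[|[|i]]]]. Qed.

Lemma coord_mu_neq t a i : (1 <= a <= 3)%N -> a != i ->
  coord (mu l1 l2 l3 i t) a = coord t a.
Proof. by case: a => [|[|[|[|a]]]] //; case: i => [|[|[|[|i]]]]. Qed.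

Lemma coprod_mu t i : coprod (mu l1 l2 l3 i t) i = coprod t i.
Proof. by case: i => [|[|[|[|i]]]]. Qed.

Lemma exchange_gt0 t i : (forall b, 0 < coord t b) -> 0 < exchange t i.
Proof.
move=> /(forall_coordP (<%R 0)) [h1 h2 h3].
have quad_gt0 (x y : rat) (l : nat) : 0 < x -> 0 < y -> 0 < x ^+ 2 + l%:R * x * y + y ^+ 2.
  move=> x0 y0; have := mulr_ge0 (mulr_ge0 (ler0n rat l) (ltW x0)) (ltW y0).
  by have := exprn_gt0 2 x0; have := exprn_gt0 2 y0; lra.
by case: i => [|[|[|i]]]; apply: quad_gt0.
Qed.

Lemma mu_pos t i : (forall b, 0 < coord t b) -> forall b, 0 < coord (mu l1 l2 l3 i t) b.
Proof.
move=> /[dup] t_pos /(forall_coordP (<%R 0)) [h1 h2 h3].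
have ex_pos (j : nat) x : 0 < x -> 0 < exchange t j / x.
  by apply: divr_gt0; apply: exchange_gt0.
by case: i => [|[|[|[|i]]]] //= [|[|[|b]]] //=;
  [exact: (ex_pos 1%N) | exact: (ex_pos 2%N) | exact: (ex_pos 3%N)..].
Qed.

Definition markov_form (t : triple) : rat := markov_sum t - markov_const * tprod t.

(* mu_i swaps x_i with the other root of [markov_form = 0] seen as a quadratic in x_i. *)
Lemma markov_form_mu t i : (forall b, 0 < coord t b) -> (1 <= i <= 3)%N ->
  markov_form (mu l1 l2 l3 i t) = exchange t i / coord t i ^+ 2 * markov_form t.
Proof.
move=> /(forall_coordP (<%R 0)) [h1 h2 h3].
rewrite /markov_form /markov_sum /tprod.
by case: i => [|[|[|[|i]]]] //= _; field; rewrite ?gt_eqF.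
Qed.

Lemma ratio_mu t i : (forall b, 0 < coord t b) -> (1 <= i <= 3)%N ->
  ratio (mu l1 l2 l3 i t) i = exchange t i / tprod t.
Proof.
move=> t_pos i3; rewrite /ratio coord_mu // coprod_mu -(coord_coprod t i).
by rewrite invfM mulrA.
Qed.

Lemma sq_le_exchange t a i : (forall b, 0 < coord t b) ->
  (1 <= a <= 3)%N -> (1 <= i <= 3)%N -> a != i -> coord t a ^+ 2 <= exchange t i.
Proof.
move=> /(forall_coordP (<%R 0)) [h1 h2 h3].
have m1 := mulr_ge0 (mulr_ge0 (ler0n rat l1) (ltW h2)) (ltW h3).
have m2 := mulr_ge0 (mulr_ge0 (ler0n rat l2) (ltW h1)) (ltW h3).
have m3 := mulr_ge0 (mulr_ge0 (ler0n rat l3) (ltW h1)) (ltW h2).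
have s1 := exprn_gt0 2 h1; have s2 := exprn_gt0 2 h2; have s3 := exprn_gt0 2 h3.
by case: a => [|[|[|[|a]]]] //; case: i => [|[|[|[|i]]]] //= _ _ _; lra.
Qed.

Lemma ratio_le_mu t a i : (forall b, 0 < coord t b) ->
  (1 <= a <= 3)%N -> (1 <= i <= 3)%N -> a != i -> ratio t a <= ratio (mu l1 l2 l3 i t) i.
Proof.
move=> t_pos a3 i3 ai; rewrite ratio_sqE // ratio_mu //.
by rewrite ler_pM2r ?invr_gt0 ?tprod_gt0 // sq_le_exchange.
Qed.

Lemma sq_le_markov_sum t a : (forall b, 0 < coord t b) -> coord t a ^+ 2 <= markov_sum t.
Proof.
move=> /(forall_coordP (<%R 0)) [h1 h2 h3].
have m1 := mulr_ge0 (mulr_ge0 (ler0n rat l1) (ltW h2)) (ltW h3).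
have m2 := mulr_ge0 (mulr_ge0 (ler0n rat l2) (ltW h3)) (ltW h1).
have m3 := mulr_ge0 (mulr_ge0 (ler0n rat l3) (ltW h1)) (ltW h2).
have s1 := exprn_gt0 2 h1; have s2 := exprn_gt0 2 h2; have s3 := exprn_gt0 2 h3.
by rewrite /markov_sum; case: a => [|[|[|a]]] /=; lra.
Qed.

Lemma ratio_le_markov_const t a : (forall b, 0 < coord t b) -> markov_form t = 0 ->
  ratio t a <= markov_const.
Proof.
move=> t_pos /eqP; rewrite subr_eq0 => /eqP t_markov.
by rewrite ratio_sqE // ler_pdivrMr ?tprod_gt0 // -t_markov sq_le_markov_sum.
Qed.

Lemma markov_const_sub_ratio_le t a n : (forall b, 0 < coord t b) -> markov_form t = 0 ->
  0 < n -> (forall b, n <= coord t b) -> (forall b, coord t b <= coord t a) ->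
  markov_const - ratio t a <= (2 + l1 + l2 + l3)%N%:R / n.
Proof.
move=> t_pos /eqP; rewrite subr_eq0 => /eqP t_markov n0 t_ge_n t_le_a.
have P0 := tprod_gt0 _ t_pos.
rewrite ratio_sqE // -[markov_const](mulfK (lt0r_neq0 P0)) -t_markov -mulrBl.
rewrite ler_pdivrMr // mulrAC ler_pdivlMr //.
have := t_ge_n 1%N; have := t_ge_n 2%N; have := t_ge_n 3%N.
have := t_le_a 1%N; have := t_le_a 2%N; have := t_le_a 3%N.
rewrite /markov_sum /tprod !natrD.
have l0 (l : nat) : 0 <= l%:R :> rat by [].
case: a {t_le_a} => [|[|[|a]]] /= a3 a2 a1 n3 n2 n1.
- have := quadratic_tail_le (ltW n0) n1 n2 a1 a2 (l0 l2) (l0 l3) (l0 l1); lra.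
- have := quadratic_tail_le (ltW n0) n2 n3 a2 a3 (l0 l3) (l0 l1) (l0 l2); lra.
- have := quadratic_tail_le (ltW n0) n3 n1 a3 a1 (l0 l1) (l0 l2) (l0 l3); lra.
- have := quadratic_tail_le (ltW n0) n1 n2 a1 a2 (l0 l2) (l0 l3) (l0 l1); lra.
Qed.

Section RatioSequence.
Variable w : nat -> nat.
Hypothesis w_reduced : reduced_seq w.
Local Notation T := (Tseq l1 l2 l3 w).
Local Notation k := (kseq l1 l2 l3 w).

Lemma w_range j : (0 < j)%N -> (1 <= w j <= 3)%N.
Proof. by case: w_reduced => w3 _; apply: w3. Qed.

Lemma w_neq j : (0 < j)%N -> w j != w j.+1.
Proof. by case: w_reduced => _; apply. Qed.

Lemma Tseq_pos j b : 0 < coord (T j) b.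
Proof. by elim: j b => [|j IH] /=; [case=> [|[|[|b]]] | apply: mu_pos]. Qed.

Lemma markov_form_Tseq j : markov_form (T j) = 0.
Proof.
elim: j => [|j IH].
  by rewrite /markov_form /markov_sum /markov_const /tprod /= !natrD; ring.
by rewrite /= markov_form_mu ?IH ?mulr0 ?w_range //; apply: Tseq_pos.
Qed.

Lemma kseqE j : k j = ratio (T j) (w j).
Proof. by rewrite /kseq /ratio; case: (w j) => [|[|[|i]]]. Qed.

Lemma kseq_le j : k j <= markov_const.
Proof.
by rewrite kseqE ratio_le_markov_const //; [apply: Tseq_pos | apply: markov_form_Tseq].
Qed.

Lemma kseq1_ge2 : 2 <= k 1.
Proof.
rewrite kseqE /= ratio_mu ?w_range //; last by case=> [|[|[|b]]].
have q1 := ler0n rat l1; have q2 := ler0n rat l2; have q3 := ler0n rat l3.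
by rewrite /tprod; case: (w 1) => [|[|[|i]]]; rewrite /= !(mulr1, expr1n, invr1); lra.
Qed.

Lemma kseq0 : k 0 = 1.
Proof. by rewrite kseqE /ratio; case: (w 0) => [|[|[|i]]]; rewrite /= mul1r invr1. Qed.

Lemma kseq_nondecreasing : {homo k : m n / (m <= n)%N >-> m <= n}.
Proof.
apply/nondecreasing_seqP => -[|j].
  by rewrite kseq0 (le_trans _ kseq1_ge2) // ler1n.
rewrite !kseqE [T j.+2]/= ratio_le_mu ?w_range ?w_neq //; exact: Tseq_pos.
Qed.

Lemma kseq_ge2 j : (0 < j)%N -> 2 <= k j.
Proof. by move=> j0; rewrite (le_trans kseq1_ge2) ?kseq_nondecreasing. Qed.

Lemma kseq_ge1 j : (0 < j)%N -> 1 <= k j.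
Proof. by move/kseq_ge2; apply: le_trans; rewrite ler1n. Qed.

Lemma coord_newE j : coord (T j) (w j) = k j * coprod (T j) (w j).
Proof. by rewrite kseqE /ratio divfK // lt0r_neq0 // coprod_gt0 //; apply: Tseq_pos. Qed.

Lemma Tseq_ge1 j b : 1 <= coord (T j) b.
Proof.
elim: j b => [|j IH]; first by case=> [|[|[|b]]].
move=> b; have [{}b b3 ->] := coord_index_in_range b.
have [->|bw] := eqVneq b (w j.+1).
  rewrite coord_newE [T j.+1]/= coprod_mu mulr_ege1 ?coprod_ge1 //.
  exact: kseq_ge1.
by rewrite [T j.+1]/= coord_mu_neq.
Qed.

Lemma coord_le_new j b : (0 < j)%N -> coord (T j) b <= coord (T j) (w j).
Proof.
move=> j0; have [{}b b3 ->] := coord_index_in_range b.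
have [->//|bw] := eqVneq b (w j).
rewrite coord_newE (le_trans (coprod_ge_coord _ _ _ (Tseq_ge1 j) b3 (w_range _ j0) bw)) //.
by rewrite ler_peMl ?kseq_ge1 // ltW // coprod_gt0 //; apply: Tseq_pos.
Qed.

Lemma coord_new_double j : (0 < j)%N -> 2 * coord (T j) (w j) <= coord (T j.+1) (w j.+1).
Proof.
move=> j0; rewrite [in X in _ <= X]coord_newE [T j.+1 in X in coprod X _]/= coprod_mu.
rewrite ler_pM ?kseq_ge2 ?coprod_ge_coord ?w_range ?w_neq //.
- by rewrite ltW // Tseq_pos.
- exact: Tseq_ge1.
Qed.

Lemma coord_new_ge j : (0 < j)%N -> j%:R <= coord (T j) (w j).
Proof.
elim: j => [//|[|j] IH _]; first exact: Tseq_ge1.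
have := coord_new_double _ (ltn0Sn j); have := IH isT.
have : 1 <= j.+1%:R :> rat by rewrite ler1n.
by rewrite -[j.+2]addn1 natrD; lra.
Qed.

Lemma coord_Tseq_step j b : (0 < j)%N -> coord (T j) b <= coord (T j.+1) b.
Proof.
move=> j0; have [a a3 eqa] := coord_index_in_range b; rewrite !eqa.
have [->|aw] := eqVneq a (w j.+1); last by rewrite [T j.+1]/= coord_mu_neq.
apply: le_trans (coord_new_double _ j0); rewrite -[X in X <= _]mul1r ler_pM //.
- by rewrite ltW // Tseq_pos.
- exact: coord_le_new.
Qed.

Lemma coord_Tseq_le i j b : (0 < i)%N -> (i <= j)%N -> coord (T i) b <= coord (T j) b.
Proof.
move=> i0 /subnKC <-; elim: (j - i)%N => [|d IH]; rewrite ?addn0 // addnS.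
exact: le_trans IH (coord_Tseq_step _ _ (ltn_addr _ i0)).
Qed.

Lemma coord_ge_visit i j : (0 < i)%N -> (i <= j)%N -> i%:R <= coord (T j) (w i).
Proof. by move=> i0 ij; rewrite (le_trans (coord_new_ge _ i0)) ?coord_Tseq_le. Qed.

Lemma kseq_gap n : (forall a, (1 <= a <= 3)%N -> appears_infinitely w a) ->
  exists J, markov_const - k J <= (2 + l1 + l2 + l3)%N%:R / n.+1%:R.
Proof.
move=> w_inf.
have [J visits] : exists J, {in iota 1 3, forall a,
    exists2 i, (n.+1 <= i <= J)%N & w i = a}.
  by apply: appears_all_within => a; rewrite mem_iota; apply: w_inf.
have visitsJ a : (1 <= a <= 3)%N -> n.+1%:R <= coord (T J) a.
  move=> a3; have [|i /andP [ni iJ] <-] := visits a; first by rewrite mem_iota.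
  by rewrite (le_trans _ (coord_ge_visit _ _ (leq_trans _ ni) iJ)) ?ler_nat.
have J0 : (0 < J)%N.
  by have [i /andP [ni iJ] _] := visits 1%N isT; rewrite (leq_trans _ iJ) // (leq_trans _ ni).
exists J; rewrite kseqE markov_const_sub_ratio_le ?ltr0Sn //.
- exact: Tseq_pos.
- exact: markov_form_Tseq.
- by move=> b; have [a a3 ->] := coord_index_in_range b; apply: visitsJ.
- by move=> b; apply: coord_le_new.
Qed.

End RatioSequence.
End Mutation.

Lemma nondecreasing_cvg_bound (R : realType) (u : R ^nat) (L C : R) :
  {homo u : m n / (m <= n)%N >-> m <= n} -> (forall n, u n <= L) ->
  (forall n, exists J, L - u J <= C / n.+1%:R) -> u @ \oo --> L.
Proof.
move=> u_nd u_le u_gap; apply/cvgrPdist_le => e e0.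
have [n Cn] : exists n, C / n.+1%:R <= e.
  exists (Num.bound (`|C| / e)); rewrite ler_pdivrMr // mulrC -ler_pdivrMr //.
  have e_inv_ge0 : 0 <= e^-1 by rewrite invr_ge0 ltW.
  apply: le_trans (ler_wpM2r e_inv_ge0 (ler_norm C)) (ltW (lt_le_trans (archi_boundP _) _)).
    by rewrite mulr_ge0.
  by rewrite ler_nat.
have [J uJ] := u_gap n.
near=> m; rewrite ger0_norm ?subr_ge0 // (le_trans _ (le_trans uJ Cn)) // lerB //.
by apply: u_nd; near: m; exact: nbhs_infty_ge.
Unshelve. all: by end_near.
Qed.

Theorem theorem6p6 (R : realType) (l1 l2 l3 : nat) (w : nat -> nat) :
  reduced_seq w ->
  ((forall i, (1 <= i <= 3)%N -> appears_infinitely w i) ->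
     (fun j => ratr (kseq l1 l2 l3 w j) : R) @ \oo
       --> ((3 + l1 + l2 + l3)%N%:R : R)) /\
  ((exists i, (1 <= i <= 3)%N /\ ~ appears_infinitely w i) ->
     exists kb : R, (fun j => ratr (kseq l1 l2 l3 w j) : R) @ \oo --> kb).
Proof.
move=> w_reduced; set u := fun j => ratr (kseq l1 l2 l3 w j) : R.
have u_nd : {homo u : m n / (m <= n)%N >-> m <= n}.
  by move=> m n mn; rewrite ler_rat kseq_nondecreasing.
have u_le j : u j <= ratr (markov_const l1 l2 l3) by rewrite ler_rat kseq_le.
(* (2) holds for every reduced w: k is nondecreasing and bounded by K. *)
split => [w_inf | _].
  rewrite -ratr_nat.
  apply: (@nondecreasing_cvg_bound R u _ (ratr (2 + l1 + l2 + l3)%N%:R)) => // n.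
  have [J gapJ] := kseq_gap l1 l2 l3 w w_reduced n w_inf; exists J.
  by rewrite -rmorphB -(ratr_nat R n.+1) -fmorph_div ler_rat.
exists (sup (range u)); apply: nondecreasing_cvgn => //.
by exists (ratr (markov_const l1 l2 l3)) => _ [j _ <-].
Qed.
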